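(* Let $n$ be the number of worker nodes, let $q\ge n$ be an odd integer, $\theta = 2\pi/q$, and let $1\le k_A\le n$. Let $\mathbf{R}_\theta = \begin{bmatrix}\cos\theta & -\sin\theta\\ \sin\theta & \cos\theta\end{bmatrix}$. Let $\mathbf{G}^{rot}$ be the real $2k_A\times 2n$ matrix whose $(i,j)$-th $2\times 2$ block is $\mathbf{R}_\theta^{ji}$ for $i\in\{0,\dots,k_A-1\}$, $j\in\{0,\dots,n-1\}$. A matrix $\mathbf{A}\in\mathbb{R}^{t\times r}$ is split into $2k_A$ equal block-columns $\mathbf{A}_{\langle\alpha,\beta\rangle}$, $\alpha\in\{0,\dots,k_A-1\}$, $\beta\in\{0,1\}$ (ordered lexicographically), and worker $i$ stores $\hat{\mathbf{A}}_{\langle i,j\rangle}=\sum_{\alpha,\beta}\mathbf{G}^{rot}(2\alpha+\beta,2i+j)\mathbf{A}_{\langle\alpha,\beta\rangle}$ for $j\in\{0,1\}$ together with $\mathbf{x}\in\mathbb{R}^t$, and returns $\hat{\mathbf{A}}_{\langle i,j\rangle}^T\mathbf{x}$, $j=0,1$. Then the scheme has threshold $k_A$: for every set of distinct worker indices $i_0,\dots,i_{k_A-1}\in\{0,\dots,n-1\}$, the $2k_A\times 2k_A$ recovery matrix $\tilde{\mathbf{G}}^{rot}$ formed by the block-columns $i_0,\dots,i_{k_A-1}$ of $\mathbf{G}^{rot}$ (i.e. whose $(a,b)$ block is $\mathbf{R}_\theta^{i_b a}$) is nonsingular, so $\mathbf{A}^T\mathbf{x}$ can be recovered from the results of any $k_A$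 workers. Moreover, the worst-case condition number over all such choices satisfies $\max\kappa(\tilde{\mathbf{G}}^{rot}) \le O(q^{\,q-k_A+c_1})$ with $c_1=5.5$.
   Context: For a square matrix $\mathbf{M}$, $\kappa(\mathbf{M})=\|\mathbf{M}\|\|\mathbf{M}^{-1}\|$ with $\|\cdot\|$ the largest singular value. Recovery: for each coordinate position, the row vector $\mathbf{m}\in\mathbb{R}^{1\times 2k_A}$ of the corresponding entries of $\mathbf{A}_{\langle\alpha,\beta\rangle}^T\mathbf{x}$ and the row vector $\mathbf{c}$ of the corresponding received entries satisfy $\mathbf{m}\tilde{\mathbf{G}}^{rot}=\mathbf{c}$. A scheme has threshold $\tau$ if the master can decode from any $\tau$ completed workers. *)

From HB Require Import structures.
From mathcomp Require Import all_boot all_order all_algebra.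
From mathcomp Require Import all_classical all_reals all_analysis.
From mathcomp Require Import zify.
Set Implicit Arguments. Unset Strict Implicit. Unset Printing Implicit Defensive.
Import Order.TTheory GRing.Theory Num.Theory.
Local Open Scope ring_scope.

Lemma blkidx_proof (k : nat) (c : 'I_(2 * k)) : (c %/ 2 < k)%N.
Proof. have := ltn_ord c. lia. Qed.
Definition blkidx (k : nat) (c : 'I_(2 * k)) : 'I_k := Ordinal (blkidx_proof c).

Lemma parity_proof (k : nat) (c : 'I_(2 * k)) : (c %% 2 < 2)%N.
Proof. by rewrite ltn_mod. Qed.
Definition parity (k : nat) (c : 'I_(2 * k)) : 'I_2 := Ordinal (parity_proof c).

Lemma wcol_proof (n : nat) (i : 'I_n) (b : 'I_2) : (2 * i + b < 2 * n)%N.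
Proof. have := ltn_ord i; have := ltn_ord b. lia. Qed.
Definition wcol (n : nat) (i : 'I_n) (b : 'I_2) : 'I_(2 * n) := Ordinal (wcol_proof i b).

Section Defs.
Variable R : realType.

Definition theta (q : nat) : R := 2 * pi / q%:R.

Definition Rtheta (q : nat) : 'M[R]_2 :=
  \matrix_(a < 2, b < 2)
    (if a == b then cos (theta q)
     else if (a : nat) == 0%N then - sin (theta q) else sin (theta q)).

Definition Grot (q n kA : nat) : 'M[R]_(2 * kA, 2 * n) :=
  \matrix_(r < 2 * kA, c < 2 * n)
    ((Rtheta q) ^+ (blkidx c * blkidx r)) (parity r) (parity c).

Definition Gtilde (q n kA : nat) (sel : 'I_kA -> 'I_n) : 'M[R]_(2 * kA) :=
  colsub (fun c : 'I_(2 * kA) => wcol (sel (blkidx c)) (parity c)) (Grot q n kA).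

Definition vnorm (m : nat) (v : 'cV[R]_m) : R := Num.sqrt (\sum_(i < m) v i 0 ^+ 2).

Definition opnorm (m : nat) (M : 'M[R]_m) : R :=
  sup [set vnorm (M *m v) | v in [set v : 'cV[R]_m | vnorm v <= 1]]%classic.

Definition cond_num (m : nat) (M : 'M[R]_m) : R := opnorm M * opnorm (invmx M).

End Defs.

From HB Require Import structures.
From mathcomp Require Import all_boot all_order all_algebra.
From mathcomp Require Import all_classical all_reals all_analysis.
From mathcomp Require Import complex.
From mathcomp Require Import ring lra zify.
Set Implicit Arguments.
Unset Strict Implicit.
Unset Printing Implicit Defensive.
Import Order.TTheory GRing.Theory Num.Theory.
Local Open Scope ring_scope.

(* Encode a row vector of length 2k by the complex numbers z_a = m_(2a) - i m_(2a+1).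
   Right multiplication by R_theta^j becomes multiplication by omega^j, where
   omega = exp(2 pi i / q), so multiplying by Gtilde evaluates P = sum_a z_a X^a at
   the k selected q-th roots of unity.  For odd q, distinct q-th roots of unity are
   at distance at least 2/q.  Given a root omega^c outside the selection, multiply P
   by the polynomial vanishing at the q - k - 1 remaining roots: the product H has
   degree < q - 1, so sum_c H(omega^c) omega^c = 0, and this bounds |P(omega^c)| by
   q^(q-k-1) times the sum of the selected values.  The inverse discrete Fourier
   transform then bounds every z_a, hence every entry of Gtilde^-1, by q^(q-k-1);
   the entries of Gtilde are rotation entries, and entrywise bounds bound spectral
   norms. *)

Section PrimitiveRootSums.
Variables (F : fieldType) (q : nat) (w : F).
Hypothesis w_prim : q.-primitive_root w.

Lemma sum_prim_root_exprX m :
  \sum_(c < q) (w ^+ m) ^+ c = if (q %| m)%N then q%:R else 0.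
Proof.
rewrite (prim_order_dvd w_prim); have [->|wm_neq1] := eqVneq (w ^+ m) 1.
  by under eq_bigr do rewrite expr1n; rewrite sumr_const card_ord.
have : (w ^+ m - 1) * \sum_(c < q) (w ^+ m) ^+ c = 0.
  by rewrite -subrX1 exprAC (prim_expr_order w_prim) expr1n subrr.
by move/eqP; rewrite mulf_eq0 subr_eq0 (negbTE wm_neq1) => /eqP.
Qed.

Lemma sum_horner_prim_root (H : {poly F}) t : (size H <= q)%N -> (0 < t <= q)%N ->
  \sum_(c < q) H.[w ^+ c] * (w ^+ c) ^+ t = q%:R * H`_(q - t).
Proof.
move=> sH t_range.
under eq_bigr do rewrite (horner_coef_wide _ sH) mulr_suml.
rewrite exchange_big /=.
under eq_bigr => i _ do under eq_bigr do rewrite -mulrA -exprD exprAC.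
under eq_bigr do rewrite -mulr_sumr sum_prim_root_exprX.
have qt_lt : (q - t < q)%N by lia.
have t_le : (t <= q)%N by case/andP: t_range.
rewrite (bigD1 (Ordinal qt_lt)) //= subnK // dvdnn mulrC big1 ?addr0 // => i /eqP i_neq.
case: ifP => [/dvdnP[d hd]|]; rewrite ?mulr0 //; case: i_neq; apply: val_inj => /=.
have := ltn_ord i; move: t_range hd; case: d => [|[|d]]; lia.
Qed.

End PrimitiveRootSums.

Section PrimitiveRootInterpolation.
Variables (F : numFieldType) (q : nat) (w : F).
Hypotheses (w_prim : q.-primitive_root w) (norm_w : `|w| = 1).
Hypothesis w_chord : forall m, (0 < m < q)%N -> 2 / q%:R <= `|w ^+ m - 1|.

Let q_gt0 : (0 < q)%N := prim_order_gt0 w_prim.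

Lemma norm_prim_root_expr j : `|w ^+ j| = 1.
Proof. by rewrite normrX norm_w expr1n. Qed.

Lemma chord_prim_root (a c : 'I_q) : a != c -> 2 / q%:R <= `|w ^+ a - w ^+ c|.
Proof.
wlog lt_ca : a c / (c < a)%N.
  move=> wlog_lt a_neq_c; case: (ltngtP c a) => [lt_ca|lt_ac|eq_ca]; first exact: wlog_lt.
    by rewrite distrC; apply: wlog_lt; rewrite // eq_sym.
  by rewrite (val_inj eq_ca) eqxx in a_neq_c.
have -> : w ^+ a - w ^+ c = w ^+ c * (w ^+ (a - c) - 1).
  by rewrite mulrBr mulr1 -exprD subnKC // ltnW.
rewrite normrM norm_prim_root_expr mul1r => _; apply: w_chord.
by rewrite subn_gt0 lt_ca (leq_ltn_trans (leq_subr _ _)).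
Qed.

Lemma norm_coef_le_sum_horner (H : {poly F}) a : (size H <= q)%N -> (a < q)%N ->
  q%:R * `|H`_a| <= \sum_(c < q) `|H.[w ^+ c]|.
Proof.
move=> sH lt_aq; rewrite -[q%:R]ger0_norm // -normrM.
rewrite -[in H`_a](subKn (ltnW lt_aq)) -(sum_horner_prim_root w_prim) //; last by lia.
apply: le_trans (ler_norm_sum _ _ _) _; apply: ler_sum => c _.
by rewrite normrM -exprM norm_prim_root_expr mulr1.
Qed.

Lemma norm_horner_out_le (H : {poly F}) (S : {set 'I_q}) (c : 'I_q) :
  (size H < q)%N -> c \notin S ->
  (forall c', c' \notin S -> c' != c -> root H (w ^+ c')) ->
  `|H.[w ^+ c]| <= \sum_(c' in S) `|H.[w ^+ c']|.
Proof.
move=> sH cS H_roots.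
have := sum_horner_prim_root w_prim (t := 1) (ltnW sH) q_gt0.
rewrite nth_default; last by rewrite subn1 -ltnS prednK.
rewrite mulr0 (bigID (mem S)) /= [X in _ + X](bigD1 c) //=.
rewrite [X in _ + (_ + X)]big1 => [|c' /andP[c'S c'c]]; last first.
  by rewrite (eqP (H_roots _ c'S c'c)) mul0r.
rewrite addr0 addrC => /eqP; rewrite addr_eq0 expr1 => /eqP eq_sum.
rewrite -[`|H.[w ^+ c]|]mulr1 -(norm_prim_root_expr c) -normrM eq_sum normrN.
apply: le_trans (ler_norm_sum _ _ _) _; apply: ler_sum => c' _.
by rewrite expr1 normrM norm_prim_root_expr mulr1.
Qed.

Definition node_poly (T : {set 'I_q}) : {poly F} := \prod_(c in T) ('X - (w ^+ c)%:P).

Lemma size_node_poly (T : {set 'I_q}) : size (node_poly T) = #|T|.+1.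
Proof. by rewrite /node_poly -big_enum size_prod_XsubC cardE. Qed.

Lemma horner_node_poly (T : {set 'I_q}) x :
  (node_poly T).[x] = \prod_(c in T) (x - w ^+ c).
Proof. by rewrite horner_prod; apply: eq_bigr => c _; rewrite hornerXsubC. Qed.

Lemma root_node_poly (T : {set 'I_q}) c : c \in T -> root (node_poly T) (w ^+ c).
Proof.
by move=> cT; rewrite /root horner_node_poly (bigD1 c) //= subrr mul0r.
Qed.

Lemma norm_node_poly_ge (T : {set 'I_q}) c : c \notin T ->
  (2 / q%:R) ^+ #|T| <= `|(node_poly T).[w ^+ c]|.
Proof.
move=> cT; rewrite horner_node_poly normr_prod -prodr_const.
apply: ler_prod => c' c'T; rewrite divr_ge0 ?ler0n ?chord_prim_root //.
by apply: contraNneq cT => ->.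
Qed.

Lemma norm_node_poly_le (T : {set 'I_q}) c : `|(node_poly T).[w ^+ c]| <= 2 ^+ #|T|.
Proof.
rewrite horner_node_poly normr_prod -prodr_const; apply: ler_prod => c' _.
by rewrite normr_ge0 (le_trans (ler_normB _ _)) // !norm_prim_root_expr.
Qed.

Lemma norm_horner_prim_root_le k (e : 'I_k -> 'I_q) (P : {poly F}) (c : 'I_q) :
  injective e -> (size P <= k)%N ->
  `|P.[w ^+ c]| <= q%:R ^+ (q - k - 1) * \sum_(b < k) `|P.[w ^+ e b]|.
Proof.
move=> e_inj sP; set S := [set e b | b in 'I_k].
have sum_S (g : 'I_q -> F) : \sum_(c' in S) g c' = \sum_(b < k) g (e b).
  by rewrite big_imset //; apply: in2W.
have [/imsetP[b _ ->]|cS] := boolP (c \in S).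
  rewrite -[X in X <= _]mul1r ler_pM ?exprn_ege1 ?ler1n //.
  by rewrite (bigD1 b) //= lerDl sumr_ge0.
set T := ~: (c |: S).
have card_S : #|S| = k by rewrite card_imset // card_ord.
have k_lt_q : (k < q)%N.
  by have := max_card (c |: S); rewrite cardsU1 cS card_S card_ord.
have card_T : #|T| = (q - k - 1)%N.
  by have := cardsC (c |: S); rewrite -/T cardsU1 cS card_S card_ord; lia.
have size_PD : (size (P * node_poly T)%R < q)%N.
  apply: leq_ltn_trans (size_polyMleq _ _) _; rewrite size_node_poly card_T; lia.
have PD_roots c' : c' \notin S -> c' != c -> root (P * node_poly T) (w ^+ c').
  move=> c'S c'c; rewrite rootM root_node_poly ?orbT //.
  by rewrite !inE negb_or c'c.
have cT : c \notin T by rewrite !inE eqxx.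
have := norm_horner_out_le size_PD cS PD_roots; rewrite sum_S hornerM normrM => le_sum.
have key : `|P.[w ^+ c]| * (2 / q%:R) ^+ #|T| <=
           2 ^+ #|T| * \sum_(b < k) `|P.[w ^+ e b]|.
  apply: le_trans (ler_wpM2l (normr_ge0 _) (norm_node_poly_ge cT)) _.
  apply: le_trans le_sum _; rewrite mulr_sumr; apply: ler_sum => b _.
  rewrite hornerM normrM [X in _ <= X]mulrC.
  by apply: ler_wpM2l => //; exact: norm_node_poly_le.
have chord_gt0 : 0 < (2 / q%:R) ^+ #|T| :> F by rewrite exprn_gt0 ?divr_gt0 ?ltr0n.
rewrite -(ler_pM2r chord_gt0) (le_trans key) // -card_T mulrAC -exprMn.
by rewrite [q%:R * _]mulrC divfK ?pnatr_eq0 -?lt0n.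
Qed.

Lemma norm_le_vandermonde_prim_root k (e : 'I_k -> 'I_q) (z : 'I_k -> F) (a : 'I_k) :
  injective e ->
  `|z a| <= q%:R ^+ (q - k - 1) * \sum_(b < k) `|\sum_(a' < k) z a' * w ^+ (e b * a')|.
Proof.
move=> e_inj; set P := \sum_(a' < k) z a' *: 'X^a'.
have k_le_q : (k <= q)%N by have := leq_card e e_inj; rewrite !card_ord.
have sP : (size P <= k)%N.
  apply: leq_trans (size_sum _ _ _) _; apply/bigmax_leqP => a' _.
  by rewrite (leq_trans (size_scale_leq _ _)) // size_polyXn.
have coefP : P`_a = z a by rewrite coef_sumMXn (big_pred1 a).
have hornerP b : P.[w ^+ e b] = \sum_(a' < k) z a' * w ^+ (e b * a').
  by rewrite horner_sum; apply: eq_bigr => a' _; rewrite hornerZ hornerXn exprM.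
rewrite -coefP; under eq_bigr do rewrite -hornerP.
rewrite -(ler_pM2l (_ : 0 < q%:R)) ?ltr0n //.
have a_lt_q : (a < q)%N := leq_trans (ltn_ord a) k_le_q.
apply: le_trans (norm_coef_le_sum_horner (leq_trans sP k_le_q) a_lt_q) _.
apply: le_trans (ler_sum _ (fun c _ => norm_horner_prim_root_le c e_inj sP)) _.
by rewrite sumr_const card_ord mulr_natl.
Qed.

End PrimitiveRootInterpolation.

Lemma norm_expr_sub1_le (F : numDomainType) (x : F) n :
  `|x| <= 1 -> `|x ^+ n - 1| <= n%:R * `|x - 1|.
Proof.
move=> x_le1; elim: n => [|n IHn]; first by rewrite subrr normr0 mul0r.
have -> : x ^+ n.+1 - 1 = x * (x ^+ n - 1) + (x - 1) by rewrite exprS; ring.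
rewrite mulrSr mulrDl mul1r (le_trans (ler_normD _ _)) // lerD2r normrM.
by rewrite -[X in _ <= X]mul1r ler_pM.
Qed.

Section ExpI.
Variable R : realType.
Local Open Scope complex_scope.

Definition expi (x : R) : R[i] := cos x +i* sin x.

Lemma expi0 : expi 0 = 1.
Proof. by rewrite /expi cos0 sin0. Qed.

Lemma expiD x y : expi (x + y) = expi x * expi y.
Proof. by rewrite /expi cosD sinD [sin x * _ + _]addrC. Qed.

Lemma expiX x n : expi x ^+ n = expi (n%:R * x).
Proof.
elim: n => [|n IHn]; first by rewrite mul0r expi0.
by rewrite exprSr IHn -expiD mulrSr mulrDl mul1r.
Qed.

Lemma norm_expi x : `|expi x| = 1.
Proof. by rewrite normc_def /= cos2Dsin2 sqrtr1. Qed.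

Lemma norm_expi_sub1 x : `|expi x - 1| = (Num.sqrt (2 - 2 * cos x))%:C.
Proof.
rewrite normc_def /=; congr (Num.sqrt _)%:C.
have := cos2Dsin2 x; lra.
Qed.

Lemma ler_cos (x y : R) : x \in `[0, pi] -> y \in `[0, pi] ->
  (cos x <= cos y) = (y <= x).
Proof.
by move=> xI yI; rewrite !le_eqVlt ltr_cos // (inj_in_eq (@cos_inj R)) // eq_sym.
Qed.

End ExpI.

Section RotationRootOfUnity.
Variables (R : realType) (q : nat).
Local Open Scope complex_scope.
Local Notation theta := (theta R q).

Lemma mulr_theta : (0 < q)%N -> q%:R * theta = pi *+ 2.
Proof. by move=> q_gt0; rewrite /theta mulrC divfK ?pnatr_eq0 -?lt0n // mulr_natl. Qed.

Lemma expi_theta_expr : (0 < q)%N -> expi theta ^+ q = 1.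
Proof. by move=> q_gt0; rewrite expiX mulr_theta // /expi cos2pi sin2pi. Qed.

Lemma cos_mul_theta_le m : (0 < m < q)%N -> cos (m%:R * theta) <= cos theta.
Proof.
move=> /andP[m_gt0 m_lt_q]; have q_gt0 : (0 < q)%N by lia.
wlog m_half : m m_gt0 m_lt_q / (2 * m <= q)%N => [wlog_half|].
  have [|q_lt] := leqP (2 * m) q; first exact: wlog_half.
  have -> : cos (m%:R * theta) = cos ((q - m)%:R * theta).
    rewrite natrB 1?ltnW // mulrBl mulr_theta // cosB cos2pi sin2pi; lra.
  by apply: wlog_half; lia.
have pi_gt0 := @pi_gt0 R.
have theta_ge0 : 0 <= theta by rewrite divr_ge0 ?ler0n ?mulr_ge0 ?ltW.
have theta_le : theta <= m%:R * theta by rewrite ler_peMl // ler1n.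
have mtheta_le : m%:R * theta <= pi.
  have : (2 * m)%:R <= q%:R :> R by rewrite ler_nat.
  rewrite /theta mulrA ler_pdivrMr ?ltr0n // natrM; nra.
by rewrite ler_cos // !in_itv /= ?theta_ge0 ?(le_trans theta_ge0) ?(le_trans theta_le).
Qed.

Lemma cos_half_theta_le0 : odd q -> (1 < q)%N -> cos ((q./2)%:R * theta) <= 0.
Proof.
move=> q_odd q_gt1; set j := q./2.
have q_eq : q = (2 * j + 1)%N by rewrite -[q in LHS]odd_double_half q_odd -mul2n addnC.
have -> : j%:R * theta = pi - pi / q%:R.
  rewrite /theta q_eq natrD natrM; field.
  by rewrite -natrM natr1 pnatr_eq0.
rewrite cosB cospi sinpi mul0r addr0 mulN1r oppr_le0; apply: cos_ge0_pihalf.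
have pi_gt0 := @pi_gt0 R.
have : 0 <= pi / q%:R :> R by rewrite divr_ge0 ?ler0n ?ltW.
have : pi / q%:R <= pi / 2 :> R by rewrite ler_pM2l // lef_pV2 ?posrE ?ltr0n ?ler_nat; lia.
lra.
Qed.

(* |omega^m - 1| >= |omega - 1| >= 1 / (q./2): omega^(q./2) lies in the left
   half-plane, and |omega^j - 1| <= j |omega - 1|. *)
Lemma chord_theta m : odd q -> (0 < m < q)%N -> 2 / q%:R <= `|expi theta ^+ m - 1|.
Proof.
move=> q_odd m_range; set j := q./2.
have q_gt1 : (1 < q)%N by lia.
have q_gt0 : 0 < q%:R :> R[i] by rewrite ltr0n; lia.
have chord_mono : `|expi theta - 1| <= `|expi theta ^+ m - 1|.
  rewrite expiX !norm_expi_sub1 lecR ler_sqrt; last by have := cos_le1 (m%:R * theta); lra.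
  by have := cos_mul_theta_le m_range; lra.
have far : 1 <= `|expi theta ^+ j - 1|.
  rewrite expiX norm_expi_sub1 -[X in X <= _]/((1 : R)%:C) lecR.
  rewrite -[X in X <= _]sqrtr1 ler_sqrt //.
  by have := cos_half_theta_le0 q_odd q_gt1; lra.
have near : `|expi theta ^+ j - 1| <= j%:R * `|expi theta - 1|.
  by apply: norm_expr_sub1_le; rewrite norm_expi.
have twice_j : (2 * j)%:R <= q%:R :> R[i] by rewrite ler_nat; lia.
rewrite ler_pdivrMr //; apply: le_trans (_ : 2 * (j%:R * `|expi theta - 1|) <= _).
  by rewrite -[X in X <= _]mulr1 ler_wpM2l ?ler0n ?(le_trans far near).
by rewrite mulrA -natrM mulrC ler_pM ?ler0n.
Qed.

Lemma prim_root_expi_theta : odd q -> q.-primitive_root (expi theta).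
Proof.
move=> q_odd; have q_gt0 : (0 < q)%N by case: (q) q_odd.
apply/andP; split => //; apply/forallP => i; rewrite unity_rootE.
have [->|i1_neq_q] := eqVneq i.+1 q; first by rewrite expi_theta_expr ?eqxx.
have i1_range : (0 < i.+1 < q)%N by rewrite ltn0Sn ltn_neqAle i1_neq_q ltn_ord.
rewrite eqbF_neg; apply/eqP => w_i1; have := chord_theta q_odd i1_range.
by rewrite w_i1 subrr normr0 ler_pdivrMr ?ltr0n // mul0r lern0.
Qed.

End RotationRootOfUnity.

Lemma blkidx_wcol k (a : 'I_k) (t : 'I_2) : blkidx (wcol a t) = a.
Proof. by apply: val_inj => /=; have := ltn_ord t; lia. Qed.

Lemma parity_wcol k (a : 'I_k) (t : 'I_2) : parity (wcol a t) = t.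
Proof. by apply: val_inj => /=; have := ltn_ord t; lia. Qed.

Lemma wcol_blkidx k (c : 'I_(2 * k)) : wcol (blkidx c) (parity c) = c.
Proof. by apply: val_inj => /=; lia. Qed.

Lemma sum_ord2 (V : nmodType) (f : 'I_2 -> V) : \sum_(t < 2) f t = f 0 + f 1.
Proof.
by rewrite big_ord_recl big_ord1; congr (f _ + f _); apply: val_inj.
Qed.

Lemma sum_wcol (V : nmodType) k (f : 'I_(2 * k) -> V) :
  \sum_(c < 2 * k) f c = \sum_(a < k) \sum_(t < 2) f (wcol a t).
Proof.
rewrite (reindex (fun p : 'I_k * 'I_2 => wcol p.1 p.2)) /=; last first.
  exists (fun c => (blkidx c, parity c)) => [[a t] _|c _] /=.
    by rewrite blkidx_wcol parity_wcol.
  by rewrite wcol_blkidx.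
by rewrite pair_big.
Qed.

Section Rotation.
Variable R : realType.
Local Open Scope complex_scope.

Definition rot (x : R) : 'M[R]_2 :=
  \matrix_(a < 2, b < 2)
    (if a == b then cos x else if (a : nat) == 0%N then - sin x else sin x).

Lemma rotD x y : rot x *m rot y = rot (x + y).
Proof.
apply/matrixP => a b; rewrite !mxE big_ord_recl big_ord1 !mxE cosD sinD.
by case: a b => [[|[|a]] a_lt] [[|[|b]] b_lt] //=; ring.
Qed.

Lemma rotX x n : rot x ^+ n = rot (n%:R * x).
Proof.
elim: n => [|n IHn].
  apply/matrixP => a b; rewrite expr0 mulr0n mul0r !mxE cos0 sin0 oppr0.
  by case: (a == b); rewrite ?if_same.
by rewrite exprSr IHn -mulmxE rotD mulrSr mulrDl mul1r.
Qed.

Lemma norm_rot_le1 x a b : `|rot x a b| <= 1.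
Proof.
by rewrite mxE; case: ifP => _; [|case: ifP => _]; rewrite ?normrN ?cos_max ?sin_max.
Qed.

(* The row vector (a, b) is encoded as a - ib, so that right multiplication
   by [rot x] becomes multiplication by [expi x]. *)
Definition complex_of_rV (v : 'rV[R]_2) : R[i] := v 0 0 +i* - v 0 1.

Lemma complex_of_rV_mul_rot (v : 'rV[R]_2) x :
  complex_of_rV (v *m rot x) = complex_of_rV v * expi x.
Proof.
rewrite /complex_of_rV /expi !mxE !sum_ord2 !mxE /=.
by apply/eqP; rewrite eq_complex /=; apply/andP; split; apply/eqP; ring.
Qed.

Lemma complex_of_rV_sum (I : finType) (f : I -> 'rV[R]_2) :
  complex_of_rV (\sum_i f i) = \sum_i complex_of_rV (f i).
Proof.
by apply: (big_morph complex_of_rV) => [u v|]; rewrite /complex_of_rV !mxE ?opprD ?oppr0.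
Qed.

Lemma norm_le_sqrt_sum_sqr (a b : R) : `|a| <= Num.sqrt (a ^+ 2 + b ^+ 2).
Proof. by rewrite -sqrtr_sqr ler_sqrt ?lerDl ?sqr_ge0 // addr_ge0 ?sqr_ge0. Qed.

Lemma norm_complex_of_rV_ge (v : 'rV[R]_2) t : `|v 0 t|%:C <= `|complex_of_rV v|.
Proof.
rewrite normc_def lecR /=; case: t => [[|[|t]] t_lt] //.
  by rewrite (_ : Ordinal t_lt = 0); [exact: norm_le_sqrt_sum_sqr | apply: val_inj].
rewrite (_ : Ordinal t_lt = 1); last exact: val_inj.
by rewrite addrC -normrN; exact: norm_le_sqrt_sum_sqr.
Qed.

Lemma norm_complex_of_rV_le (v : 'rV[R]_2) :
  `|complex_of_rV v| <= (\sum_(t < 2) `|v 0 t|)%:C.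
Proof.
rewrite sum_ord2 normc_def lecR /= -[X in _ <= X]ger0_norm ?addr_ge0 //.
rewrite -sqrtr_sqr ler_sqrt ?sqr_ge0 // sqrrN.
rewrite -(real_normK (num_real (v 0 0))) -(real_normK (num_real (v 0 1))) sqrrD.
by have := mulr_ge0 (normr_ge0 (v 0 0)) (normr_ge0 (v 0 1)); lra.
Qed.

End Rotation.

Section Recovery.
Variables (R : realType) (q n k : nat) (sel : 'I_k -> 'I_n).
Local Notation G := (Gtilde R q sel).

Definition blkrow (m : 'rV[R]_(2 * k)) (a : 'I_k) : 'rV[R]_2 := \row_t m 0 (wcol a t).

Lemma Gtilde_wcol a b s t :
  G (wcol a s) (wcol b t) = rot ((sel b * a)%N%:R * theta R q) s t.
Proof.
rewrite [LHS]mxE [LHS]mxE !blkidx_wcol !parity_wcol.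
by rewrite (_ : Rtheta R q = rot (theta R q)) // rotX.
Qed.

Lemma norm_Gtilde_le1 i j : `|G i j| <= 1.
Proof. by rewrite -(wcol_blkidx i) -(wcol_blkidx j) Gtilde_wcol norm_rot_le1. Qed.

Lemma complex_of_blkrow_mul_Gtilde m b :
  complex_of_rV (blkrow (m *m G) b) =
  \sum_(a < k) complex_of_rV (blkrow m a) * expi (theta R q) ^+ (sel b * a).
Proof.
have -> : blkrow (m *m G) b =
          \sum_(a < k) blkrow m a *m rot ((sel b * a)%N%:R * theta R q).
  apply/rowP => t; rewrite [LHS]mxE [LHS]mxE sum_wcol summxE.
  apply: eq_bigr => a _; rewrite [RHS]mxE; apply: eq_bigr => s _.
  by rewrite Gtilde_wcol [blkrow m a 0 s]mxE.
rewrite complex_of_rV_sum; apply: eq_bigr => a _.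
by rewrite complex_of_rV_mul_rot expiX.
Qed.

Hypotheses (q_odd : odd q) (n_le_q : (n <= q)%N) (sel_inj : injective sel).

Lemma norm_entry_le_mul_Gtilde (m : 'rV[R]_(2 * k)) c :
  `|m 0 c| <= q%:R ^+ (q - k - 1) * \sum_(j < 2 * k) `|(m *m G) 0 j|.
Proof.
pose e b := widen_ord n_le_q (sel b).
have e_inj : injective e by move=> b b' /(congr1 val) /= /val_inj /sel_inj.
have := norm_le_vandermonde_prim_root (prim_root_expi_theta R q_odd) (norm_expi _)
  (fun m => @chord_theta R q m q_odd) (fun a => complex_of_rV (blkrow m a))
  (blkidx c) e_inj.
under eq_bigr do rewrite -complex_of_blkrow_mul_Gtilde.
move=> /(le_trans (norm_complex_of_rV_ge _ (parity c))); rewrite mxE wcol_blkidx.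
rewrite -lecR rmorphM rmorphXn rmorph_nat rmorph_sum => /le_trans; apply.
apply: ler_wpM2l; first by rewrite exprn_ge0 ?ler0n.
rewrite sum_wcol; apply: ler_sum => b _; apply: le_trans (norm_complex_of_rV_le _) _.
by rewrite rmorph_sum; apply: ler_sum => t _; rewrite mxE.
Qed.

Lemma Gtilde_unit : G \in unitmx.
Proof.
rewrite unitmxE unitfE; apply/negP => /det0P[v v_neq0 vG0].
apply/negP: v_neq0; rewrite negbK; apply/eqP/rowP => c; rewrite mxE.
apply/eqP; rewrite -normr_le0 (le_trans (norm_entry_le_mul_Gtilde v c)) // vG0.
by rewrite big1 ?mulr0 // => j _; rewrite mxE normr0.
Qed.

Lemma norm_invmx_Gtilde_le i j : `|invmx G i j| <= q%:R ^+ (q - k - 1).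
Proof.
have := norm_entry_le_mul_Gtilde (row i (invmx G)) j.
rewrite -row_mul mulVmx ?Gtilde_unit // mxE => /le_trans; apply.
rewrite -[X in _ <= X]mulr1 ler_wpM2l ?exprn_ge0 ?ler0n //.
rewrite (bigD1 i) //= big1 => [|j' j'_neq]; rewrite !mxE ?eqxx ?normr1 ?addr0 //.
by rewrite eq_sym (negbTE j'_neq) normr0.
Qed.

End Recovery.

Section OperatorNorm.
Variables (R : realType) (m : nat).

Lemma vnorm0 : vnorm (0 : 'cV[R]_m) = 0.
Proof. by rewrite /vnorm big1 ?sqrtr0 // => i _; rewrite mxE expr2 mulr0. Qed.

Lemma norm_entry_le_vnorm (v : 'cV[R]_m) i : `|v i 0| <= vnorm v.
Proof.
have sqr_entry_ge0 j : 0 <= v j 0 ^+ 2 := sqr_ge0 (v j 0).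
by rewrite -sqrtr_sqr ler_sqrt ?sumr_ge0 // (bigD1 i) //= lerDl sumr_ge0.
Qed.

Lemma vnorm_le (v : 'cV[R]_m) B :
  0 <= B -> (forall i, `|v i 0| <= B) -> vnorm v <= m%:R * B.
Proof.
move=> B_ge0 v_le; rewrite -[m%:R * B]ger0_norm ?mulr_ge0 // -sqrtr_sqr.
rewrite ler_sqrt ?sqr_ge0 //; apply: le_trans (_ : \sum_(i < m) B ^+ 2 <= _).
  by apply: ler_sum => i _; rewrite -(real_normK (num_real _)) !expr2 ler_pM.
rewrite sumr_const card_ord -[_ *+ m]mulr_natl exprMn.
apply: ler_wpM2r; first exact: sqr_ge0.
by rewrite -natrX ler_nat; case: (m) => // m'; rewrite leq_pmulr.
Qed.

Lemma opnorm_ge0 (M : 'M[R]_m) : 0 <= opnorm M.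
Proof.
rewrite /opnorm; set E := [set _ | _ in _]%classic.
have E0 : E 0 by exists 0; rewrite /= ?mulmx0 vnorm0 ?ler01.
have [[_ E_ub]|no_sup] := pselect (has_sup E); first exact: ub_le_sup E_ub _ E0.
by rewrite sup_out.
Qed.

Lemma opnorm_le (M : 'M[R]_m) B :
  0 <= B -> (forall i j, `|M i j| <= B) -> opnorm M <= m%:R ^+ 2 * B.
Proof.
move=> B_ge0 M_le; apply: ge_sup.
  by exists 0, 0; rewrite /= ?mulmx0 vnorm0 ?ler01.
move=> _ [v /= v_le1 <-]; rewrite expr2 -mulrA.
apply: vnorm_le; first by rewrite mulr_ge0.
move=> i; rewrite mxE; apply: le_trans (ler_norm_sum _ _ _) _.
apply: le_trans (_ : \sum_(j < m) B <= _); last by rewrite sumr_const card_ord mulr_natl.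
apply: ler_sum => j _; rewrite normrM -[B]mulr1 ler_pM //.
exact: le_trans (norm_entry_le_vnorm _ _) v_le1.
Qed.

End OperatorNorm.

Lemma cond_num_Gtilde_le (R : realType) q n k (sel : 'I_k -> 'I_n) :
  odd q -> (n <= q)%N -> injective sel ->
  cond_num (Gtilde R q sel) <= (2 * k)%:R ^+ 4 * q%:R ^+ (q - k - 1).
Proof.
move=> q_odd n_le_q sel_inj; rewrite /cond_num.
have inv_le := @norm_invmx_Gtilde_le R q n k sel q_odd n_le_q sel_inj.
apply: le_trans (ler_pM (opnorm_ge0 _) (opnorm_ge0 _)
  (opnorm_le ler01 (@norm_Gtilde_le1 R q n k sel)) (opnorm_le _ inv_le)) _.
  by rewrite exprn_ge0 ?ler0n.
by rewrite mulr1 mulrA -exprD.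
Qed.

Theorem theorem2 (R : realType) :
  exists C : R, 0 < C /\
  forall (n q kA : nat), odd q -> (n <= q)%N -> (1 <= kA)%N -> (kA <= n)%N ->
  forall sel : 'I_kA -> 'I_n, injective sel ->
    (Gtilde R q sel \in unitmx) /\
    cond_num (Gtilde R q sel) <= C * (q%:R `^ (q%:R - kA%:R + 11 / 2)).
Proof.
exists 16; split => // n q k q_odd n_le_q k_ge1 k_le_n sel sel_inj.
split; first exact: Gtilde_unit.
apply: le_trans (cond_num_Gtilde_le R q_odd n_le_q sel_inj) _.
have q_ge1 : 1 <= q%:R :> R by rewrite ler1n; lia.
have k_le_q : k%:R <= q%:R :> R by rewrite ler_nat; lia.
apply: le_trans (_ : 16 * q%:R ^+ (q - k + 4) <= _).
  rewrite natrM exprMn -mulrA (_ : 2 ^+ 4 = 16 :> R); last by rewrite -natrX.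
  apply: ler_wpM2l => //.
  apply: le_trans (_ : q%:R ^+ 4 * q%:R ^+ (q - k - 1) <= _).
    by apply: ler_wpM2r; rewrite ?exprn_ge0 ?ler0n // lerXn2r ?nnegrE ?ler0n.
  by rewrite -exprD ler_weXn2l //; lia.
apply: ler_wpM2l => //; rewrite -powR_mulrn ?ler0n // ler_powR // natrD natrB; last by lia.
lra.
Qed.
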